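(* Let $F\langle X\rangle$ be an MN-algebra and let $A$ be a PI-algebra. If the completion $C\left(F\langle X\rangle/Id(A)\right)$ of the quotient normed algebra $F\langle X\rangle/Id(A)$ (with the quotient norm $\|f+Id(A)\|=\inf\{\|f+g\|: g\in Id(A)\}$) is nil, then $A$ is nilpotent.
   Context: All algebras are non-unitary associative over $F\in\{\mathbb{R},\mathbb{C}\}$. A normed algebra has a norm with $\|ab\|\le\|a\|\|b\|$; $C(B)$ denotes its completion. $F\langle X\rangle$ is the free non-unitary associative algebra over $F$ on $X=\{x_1,x_2,\dots\}$. For $f=f(x_1,\dots,x_n)$, $f^{(d_1,\dots,d_n)}$ denotes its multihomogeneous component of multidegree $(d_1,\dots,d_n)$ (the sum of terms whose monomials contain each $x_i$ exactly $d_i$ times). A norm on $F\langle X\rangle$ is multihomogeneous if $\|f^{(d_1,\dots,d_n)}\|\le\|f\|$ for all $f$ and all multidegrees; $F\langle X\rangle$ is an MN-algebra if it is a normed algebra for a multihomogeneous norm. $Id(A)$ is the set of polynomial identities of $A$ (polynomials $f$ with $f(a_1,\dots,a_m)=0$ for all $a_i\in A$); $A$ is PI if $Id(A)\ne\{0\}$. In this setting $Id(A)$ is a closed ideal so the quotient norm makes $F\langle X\rangle/Id(A)$ a normed algebra. Nil: every element nilpotent; nilpotent: all products of some fixed length $n$ vanish. *)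

From HB Require Import structures.
From mathcomp Require Import all_boot all_algebra.
From mathcomp Require Import reals.
From mathcomp Require Import complex.
From mathcomp Require Import monalg.

Set Implicit Arguments.
Unset Strict Implicit.
Unset Printing Implicit Defensive.

Import GRing.Theory Num.Theory.
Local Open Scope ring_scope.

(* The free associative algebra over F on X = {x_0, x_1, ...}.
   {malg F[{fmonom nat}]} is the (unital) free algebra F<X>^# : the monoid
   algebra of the free monoid of words over nat.  The free NON-unitary
   algebra F<X> is the subalgebra of elements with zero constant term. *)
Section FreeAlgebra.
Variable F : numFieldType.

Definition word := {fmonom nat}.
Definition FXu := {malg F[word]}.

Definition in_FX (f : FXu) : Prop := mcoeff (@mone word) f = 0.

Definition has_multideg (d : seq nat) (w : word) : bool :=
  all (fun x => x < size d)%N (w : seq nat) &&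
  all (fun i => count_mem i (w : seq nat) == nth 0%N d i) (iota 0 (size d)).

Definition mhcomp (d : seq nat) (f : FXu) : FXu :=
  [malg w in msupp f => if has_multideg d w then f@_w else 0].

Definition MN_norm (nrm : FXu -> F) : Prop :=
  [/\ (forall f, in_FX f -> 0 <= nrm f /\ (nrm f = 0 -> f = 0)),
      (forall f g, in_FX f -> in_FX g -> nrm (f + g) <= nrm f + nrm g),
      (forall (c : F) f, in_FX f -> nrm (c *: f) = `|c| * nrm f) &
      (forall f g, in_FX f -> in_FX g -> nrm (f * g) <= nrm f * nrm g)] /\
  (forall f (d : seq nat), in_FX f -> nrm (mhcomp d f) <= nrm f).

Variable A : lmodType F.
Variable mulA : A -> A -> A.

Definition nonunital_algebra : Prop :=
  [/\ associative mulA,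
      (forall (c : F) (x y z : A), mulA (c *: x + y) z = c *: mulA x z + mulA y z) &
      (forall (c : F) (x y z : A), mulA x (c *: y + z) = c *: mulA x y + mulA x z)].

Definition eval_word (a : nat -> A) (w : seq nat) : A :=
  if w is i :: w' then foldl (fun acc j => mulA acc (a j)) (a i) w' else 0.

Definition eval_poly (a : nat -> A) (f : FXu) : A :=
  \sum_(w <- finmap.enum_fset (msupp f)) f@_w *: eval_word a (w : seq nat).

Definition is_identity (f : FXu) : Prop :=
  in_FX f /\ forall a : nat -> A, eval_poly a f = 0.

Definition PI_algebra : Prop := exists f, is_identity f /\ f <> 0.

Definition nilpotent_algebra : Prop :=
  exists n : nat, forall (x : A) (s : seq A),
    size s = n -> foldl mulA x s = 0.

(* We only need the
   predicate "||f + Id(A)|| < e", i.e. exists g in Id(A), ||f + g|| < e. *)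
Variable nrm : FXu -> F.

Definition qnorm_lt (f : FXu) (e : F) : Prop :=
  exists g, is_identity g /\ nrm (f + g) < e.

(* The completion C(B): its elements are classes of Cauchy sequences of B
   (represented by sequences of representatives in F<X>), with pointwise
   operations; the class of (f_k) is zero iff ||f_k + Id(A)|| -> 0. *)
Definition quot_cauchy (f : nat -> FXu) : Prop :=
  (forall k, in_FX (f k)) /\
  forall e : F, 0 < e -> exists N : nat, forall k l : nat,
    (N <= k)%N -> (N <= l)%N -> qnorm_lt (f k - f l) e.

Definition quot_null (f : nat -> FXu) : Prop :=
  forall e : F, 0 < e -> exists N : nat, forall k : nat,
    (N <= k)%N -> qnorm_lt (f k) e.

Definition completion_quot_nil : Prop :=
  forall f : nat -> FXu, quot_cauchy f ->
    exists n : nat, (0 < n)%N /\ quot_null (fun k => f k ^+ n).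

End FreeAlgebra.

From HB Require Import structures.
From mathcomp Require Import all_boot all_algebra.
From mathcomp Require Import order reals complex monalg finmap.
Import GRing.Theory Num.Theory Order.TTheory.
Local Open Scope ring_scope.

(* Nilness of the completion, applied to the class of the constant sequence [x_0], gives
   an [n] and some [g] in [Id(A)] with [||x_0^n + g|| < ||x_0^n||].  Multihomogeneity
   bounds [||x_0^n + g||] below by the norm of its multidegree-[(n)] component
   [(1 + c) x_0^n], where [c] is the coefficient of [x_0^n] in [g]; hence [c != 0].
   Substituting [x_0 := t v] (other variables [0]) into [g] and separating the powers
   of [t] by a Vandermonde argument gives [c v^n = 0], so [A] is nil of bounded index [n].
   The Nagata-Higman theorem (characteristic 0) then makes [A] nilpotent; we follow
   Higman's proof, whose key step is that [x^(n-1) z y^(n-1)] lies in every ideal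
   containing all [n]-th powers. *)

Section Subspace.
#[local] Set Implicit Arguments.
#[local] Unset Strict Implicit.
Variables (F : numFieldType) (V : lmodType F).

Definition subspace (I : V -> Prop) : Prop :=
  [/\ I 0, (forall x y, I x -> I y -> I (x + y)) & (forall c x, I x -> I (c *: x))].

Variables (I : V -> Prop) (subI : subspace I).

Lemma subspace0 : I 0. Proof. by case: subI. Qed.
Lemma subspaceD x y : I x -> I y -> I (x + y). Proof. by case: subI => _ + _; apply. Qed.
Lemma subspaceZ c x : I x -> I (c *: x). Proof. by case: subI => _ _; apply. Qed.
Lemma subspaceB x y : I x -> I y -> I (x - y).
Proof. by move=> Ix Iy; rewrite -scaleN1r; apply/subspaceD/subspaceZ. Qed.
Lemma subspace_sum J (r : seq J) (P : pred J) (f : J -> V) :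
  (forall i, P i -> I (f i)) -> I (\sum_(i <- r | P i) f i).
Proof. by move=> If; apply: big_ind => //; [exact: subspace0 | exact: subspaceD]. Qed.

(* The Vandermonde matrix of the distinct nodes 0, 1, ..., K-1 is invertible. *)
Lemma subspace_poly_coef K (c : nat -> V) :
  (forall t : 'I_K, I (\sum_(k < K) ((t : nat)%:R ^+ k : F) *: c k)) ->
  forall k : 'I_K, I (c k).
Proof.
move=> Ipoly k.
pose M := Vandermonde K (\row_(j < K) ((j : nat)%:R : F)).
have M_unit : M \in unitmx.
  rewrite unitmxE unitfE det_Vandermonde.
  apply/prodf_neq0 => i _; apply/prodf_neq0 => j lt_ij.
  by rewrite !mxE subr_eq0 eqr_nat eq_sym neq_ltn lt_ij.
suff -> : c k = \sum_(t < K) invmx M t k *: \sum_(k' < K) ((t : nat)%:R ^+ k' : F) *: c k'.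
  by apply: subspace_sum => t _; apply/subspaceZ/Ipoly.
under eq_bigr do rewrite scaler_sumr.
rewrite exchange_big /=.
transitivity (\sum_(k' < K) (M *m invmx M) k' k *: c k'); last first.
  apply: eq_bigr => k' _; rewrite mxE scaler_suml; apply: eq_bigr => t _.
  by rewrite scalerA !mxE mulrC.
rewrite mulmxV // (bigD1 k) //= mxE eqxx scale1r big1 ?addr0 // => k' nk'k.
by rewrite mxE (negbTE nk'k) scale0r.
Qed.

End Subspace.

Lemma nseqSr (T : Type) n (v : T) : nseq n.+1 v = rcons (nseq n v) v.
Proof. by elim: n => //= n <-. Qed.

Section NonunitalAlgebra.
#[local] Set Implicit Arguments.
Variables (F : numFieldType) (A : lmodType F) (mulA : A -> A -> A).
Hypothesis algA : nonunital_algebra mulA.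
Local Notation "x ** y" := (mulA x y) (at level 40, left associativity).

Lemma mulaA x y z : x ** (y ** z) = x ** y ** z.
Proof. by case: algA => assocA _ _; rewrite assocA. Qed.
Lemma mulaDl x y z : (x + y) ** z = x ** z + y ** z.
Proof. by case: algA => _ linl _; have := linl 1 x y z; rewrite !scale1r. Qed.
Lemma mulaDr x y z : z ** (x + y) = z ** x + z ** y.
Proof. by case: algA => _ _ linr; have := linr 1 z x y; rewrite !scale1r. Qed.
Lemma mul0a z : 0 ** z = 0.
Proof. by apply: (addrI (0 ** z)); rewrite -mulaDl !addr0. Qed.
Lemma mula0 z : z ** 0 = 0.
Proof. by apply: (addrI (z ** 0)); rewrite -mulaDr !addr0. Qed.
Lemma mulaZl c x z : (c *: x) ** z = c *: (x ** z).
Proof. by case: algA => _ linl _; have := linl c x 0 z; rewrite !addr0 mul0a addr0. Qed.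
Lemma mulaZr c x z : z ** (c *: x) = c *: (z ** x).
Proof. by case: algA => _ _ linr; have := linr c z x 0; rewrite !addr0 mula0 addr0. Qed.
Lemma mula_suml J (r : seq J) (P : pred J) (f : J -> A) z :
  (\sum_(i <- r | P i) f i) ** z = \sum_(i <- r | P i) (f i ** z).
Proof. by apply: (big_morph (mulA^~ z)) => [u v|]; rewrite ?mulaDl ?mul0a. Qed.

Lemma foldl_mulaA a b s : a ** foldl mulA b s = foldl mulA (a ** b) s.
Proof. by elim: s b => [|c s IHs] b //=; rewrite IHs mulaA. Qed.

Lemma foldl_mula_lin c u v s :
  foldl mulA (c *: u + v) s = c *: foldl mulA u s + foldl mulA v s.
Proof. by elim: s u v => [|a s IHs] u v //=; rewrite mulaDl mulaZl IHs. Qed.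

(* The empty product is 0, as in [eval_word]. *)
Definition mprod (s : seq A) : A := if s is a :: s' then foldl mulA a s' else 0.

Lemma mprod_catl s1 s2 : s1 != [::] -> mprod (s1 ++ s2) = foldl mulA (mprod s1) s2.
Proof. by case: s1 => // a s1 _ /=; rewrite foldl_cat. Qed.

Lemma mprod_cat s1 s2 :
  s1 != [::] -> s2 != [::] -> mprod (s1 ++ s2) = mprod s1 ** mprod s2.
Proof. by move=> ne_s1; case: s2 => // b s2 _; rewrite mprod_catl //= foldl_mulaA. Qed.

Lemma mprod_rcons s x : s != [::] -> mprod (rcons s x) = mprod s ** x.
Proof. by move=> ne_s; rewrite -cats1 mprod_catl. Qed.

Lemma mprod_flatten s1 s2 s3 :
  s2 != [::] -> mprod (s1 ++ mprod s2 :: s3) = mprod (s1 ++ s2 ++ s3).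
Proof.
case: s2 => // b s2 _; case: s1 => [|a s1]; first by rewrite /= foldl_cat.
by rewrite !(mprod_catl (a :: s1)) //= foldl_cat foldl_mulaA.
Qed.

Lemma mprod_lin s1 s2 c u v :
  mprod (s1 ++ (c *: u + v) :: s2) = c *: mprod (s1 ++ u :: s2) + mprod (s1 ++ v :: s2).
Proof.
case: s1 => [|a s1]; first by rewrite /= foldl_mula_lin.
by rewrite !(mprod_catl (a :: s1)) //= mulaDr mulaZr foldl_mula_lin.
Qed.

Lemma mprod_mid0 s1 s2 : mprod (s1 ++ 0 :: s2) = 0.
Proof.
have := mprod_lin s1 s2 1 0 0; rewrite addr0 !scale1r => dup.
by apply: (addrI (mprod (s1 ++ 0 :: s2))); rewrite addr0 -dup.
Qed.

Lemma mprod_mid_sum s1 s2 J (r : seq J) (P : pred J) (f : J -> A) :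
  mprod (s1 ++ (\sum_(i <- r | P i) f i) :: s2) = \sum_(i <- r | P i) mprod (s1 ++ f i :: s2).
Proof.
apply: (big_morph (fun u => mprod (s1 ++ u :: s2))) => [u v|]; last exact: mprod_mid0.
by have := mprod_lin s1 s2 1 u v; rewrite !scale1r.
Qed.

Lemma mprod_nseqS n v : mprod (nseq n.+2 v) = mprod (nseq n.+1 v) ** v.
Proof. by rewrite nseqSr mprod_rcons. Qed.

Lemma mprod_nseqZ k t v : mprod (nseq k (t *: v)) = t ^+ k *: mprod (nseq k v).
Proof.
case: k => [|k]; first by rewrite /= scaler0.
elim: k => [|k IHk]; first by rewrite /= expr1.
by rewrite !mprod_nseqS IHk mulaZl mulaZr scalerA -exprSr.
Qed.

Definition ideal (I : A -> Prop) : Prop :=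
  [/\ subspace I, (forall a x, I x -> I (a ** x)) & (forall a x, I x -> I (x ** a))].

Lemma ideal0 : ideal (fun y => y = 0).
Proof. by do !split=> * //; subst; rewrite ?addr0 ?scaler0 ?mul0a ?mula0. Qed.

(* [pow_coef x w j k] is the coefficient of [t ^+ k] in [(x + t w) ^+ j.+1]. *)
Fixpoint pow_coef (x w : A) (j k : nat) : A :=
  match j, k with
  | 0, 0 => x
  | 0, 1 => w
  | 0, _ => 0
  | j'.+1, 0 => pow_coef x w j' 0 ** x
  | j'.+1, k'.+1 => pow_coef x w j' k ** x + pow_coef x w j' k' ** w
  end.

Definition pow_lin (x w : A) (j : nat) : A :=
  \sum_(0 <= i < j.+1) mprod (nseq i x ++ w :: nseq (j - i) x).

Lemma pow_coef_gt x w j k : (j.+1 < k)%N -> pow_coef x w j k = 0.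
Proof. by elim: j k => [|j IHj] [|[|k]] //= lt_jk; rewrite !IHj ?mul0a ?addr0 // ltnW. Qed.

Lemma pow_coef0 x w j : pow_coef x w j 0 = mprod (nseq j.+1 x).
Proof. by elim: j => // j IHj; rewrite mprod_nseqS -IHj. Qed.

Lemma pow_coef1 x w j : pow_coef x w j 1 = pow_lin x w j.
Proof.
rewrite /pow_lin; elim: j => [|j IHj]; first by rewrite big_nat1.
rewrite [LHS]/= IHj pow_coef0 [in RHS]big_nat_recr // subnn [nseq 0 x]/= cats1.
rewrite mprod_rcons // mula_suml; congr (_ + _); apply: eq_big_nat => i /andP [_ le_ij].
by rewrite subSn // nseqSr -rcons_cons -rcons_cat mprod_rcons //; case: (nseq i x).
Qed.

Lemma mprod_nseq_addZ x w j (t : F) :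
  mprod (nseq j.+1 (x + t *: w)) = \sum_(0 <= k < j.+2) t ^+ k *: pow_coef x w j k.
Proof.
elim: j => [|j IHj].
  by rewrite /= !big_nat_recl // big_geq // expr0 scale1r expr1 addr0.
rewrite mprod_nseqS IHj mula_suml.
under eq_bigr do rewrite mulaDr mulaZr !mulaZl scalerA -exprS.
rewrite big_split /= [in RHS]big_nat_recl //=.
under [in RHS]eq_bigr do rewrite scalerDr.
rewrite [in RHS]big_split /= [X in X + _ = _]big_nat_recl // -addrA.
do 2 congr (_ + _).
by rewrite [in RHS]big_nat_recr //= pow_coef_gt // mul0a scaler0 addr0.
Qed.

Section Ideal.
Variables (I : A -> Prop) (idI : ideal I).

Lemma ideal_subspace : subspace I. Proof. by case: idI. Qed.

Lemma idealMl a x : I x -> I (a ** x). Proof. by case: idI => _ + _; apply. Qed.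
Lemma idealMr a x : I x -> I (x ** a). Proof. by case: idI => _ _; apply. Qed.

Lemma ideal_mprod s1 u s2 : I u -> I (mprod (s1 ++ u :: s2)).
Proof.
have ideal_foldl v s : I v -> I (foldl mulA v s).
  by elim: s v => //= a s IHs v Iv; apply/IHs/idealMr.
case: s1 => [|a s1] Iu; first exact: ideal_foldl.
by rewrite (mprod_catl (a :: s1)) //=; apply/ideal_foldl/idealMl.
Qed.

Variable M : nat.
Hypothesis Ipow : forall v, I (mprod (nseq M.+1 v)).

Lemma ideal_pow_lin x w : I (pow_lin x w M).
Proof.
rewrite -pow_coef1.
apply: (subspace_poly_coef ideal_subspace (K := M.+2) _ (Ordinal (isT : 1 < M.+2)%N)).
move=> t; rewrite -(big_mkord xpredT (fun k => ((t : nat)%:R ^+ k : F) *: pow_coef x w M k)).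
by rewrite -mprod_nseq_addZ.
Qed.

(* Higman: summing the linearizations [pow_lin x (z y^j) M * y^(M-j)] over [j] and
   subtracting those of [x^i z * pow_lin y (x^(M-i)) M] over [i < M] leaves
   [(M+1) x^M z y^M]. *)
Lemma ideal_pow_mid x y z : I (mprod (nseq M x ++ z :: nseq M y)).
Proof.
set T := mprod (nseq M x ++ z :: nseq M y).
pose g i j := mprod (nseq i x ++ z :: nseq j y ++ nseq (M - i) x ++ nseq (M - j) y).
pose S1 := \sum_(0 <= j < M.+1)
  mprod ([::] ++ pow_lin x (mprod (z :: nseq j y)) M :: nseq (M - j) y).
pose S2 := \sum_(0 <= i < M)
  mprod ((nseq i x ++ [:: z]) ++ pow_lin y (mprod (nseq (M - i) x)) M :: [::]).
have S1E : S1 = \sum_(0 <= j < M.+1) \sum_(0 <= i < M.+1) g i j.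
  apply: eq_big_nat => j _; rewrite mprod_mid_sum; apply: eq_big_nat => i _.
  rewrite (mprod_flatten [::]); last by case: (nseq i x).
  by rewrite cat0s -catA cat_cons (mprod_flatten (nseq i x)).
have S2E : S2 = \sum_(0 <= i < M) \sum_(0 <= j < M.+1) g i j.
  apply: eq_big_nat => i /andP [_ lt_iM]; rewrite mprod_mid_sum.
  apply: eq_big_nat => j _.
  have ne_xM : nseq (M - i) x != [::] by rewrite -size_eq0 size_nseq subn_eq0 -ltnNge.
  rewrite (mprod_flatten (nseq j y)) // (mprod_flatten (nseq i x ++ [:: z])); last first.
    by case: (nseq j y) ne_xM; case: (nseq (M - i) x).
  by rewrite cats0 -catA.
have S1_S2 : S1 - S2 = T *+ M.+1.
  rewrite S1E S2E exchange_big /= big_nat_recr //= [X in X - _]addrC addrK.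
  rewrite -(subn0 M.+1) -sumr_const_nat; apply: eq_big_nat => j /andP [_ lt_jM].
  by rewrite /g subnn cat0s -nseqD subnKC.
have IS1 : I S1 by apply: (subspace_sum ideal_subspace) => j _; apply/ideal_mprod/ideal_pow_lin.
have IS2 : I S2 by apply: (subspace_sum ideal_subspace) => i _; apply/ideal_mprod/ideal_pow_lin.
have : I (T *+ M.+1) by rewrite -S1_S2; apply: (subspaceB ideal_subspace).
have M1_neq0 : (M.+1%:R : F) != 0 by rewrite pnatr_eq0.
by rewrite -scaler_nat => /(subspaceZ ideal_subspace M.+1%:R^-1); rewrite scalerA mulVf // scale1r.
Qed.

End Ideal.

Inductive pow_closure (I : A -> Prop) (m : nat) : A -> Prop :=
| pow_closure_base u : I u -> pow_closure I m u
| pow_closure_pow v : pow_closure I m (mprod (nseq m.+1 v))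
| pow_closure_add u u' : pow_closure I m u -> pow_closure I m u' -> pow_closure I m (u + u')
| pow_closure_scale c u : pow_closure I m u -> pow_closure I m (c *: u)
| pow_closure_mull a u : pow_closure I m u -> pow_closure I m (a ** u)
| pow_closure_mulr a u : pow_closure I m u -> pow_closure I m (u ** a).

Lemma pow_closure_ideal I m : ideal I -> ideal (pow_closure I m).
Proof.
case=> [[I0 _ _] _ _]; do !split.
- exact: pow_closure_base.
- exact: pow_closure_add.
- exact: pow_closure_scale.
- exact: pow_closure_mull.
- exact: pow_closure_mulr.
Qed.

Lemma pow_closure_sandwich I m : ideal I ->
    (forall x y z, I (mprod (nseq m.+1 x) ** z ** mprod (nseq m.+1 y))) ->
  forall u v, pow_closure I m u -> pow_closure I m v -> forall z, I (u ** z ** v).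
Proof.
move=> idI Ipow_mid u v Ju Jv.
have Ipow_l x z : I (mprod (nseq m.+1 x) ** z ** v).
  elim: Jv z => {v} [v Iv | y | v v' _ IHv _ IHv' | c v _ IHv | a v _ IHv | a v _ IHv] z.
  - exact: (idealMl idI).
  - exact: Ipow_mid.
  - by rewrite mulaDr; apply: (subspaceD (ideal_subspace idI)).
  - by rewrite mulaZr; apply: (subspaceZ (ideal_subspace idI)).
  - by rewrite mulaA -(mulaA _ z a); apply: IHv.
  - by rewrite mulaA; apply: (idealMr idI).
elim: Ju => {u} [u Iu | x | u u' _ IHu _ IHu' | c u _ IHu | a u _ IHu | a u _ IHu] z.
- by do 2 apply: (idealMr idI).
- exact: Ipow_l.
- by rewrite !mulaDl; apply: (subspaceD (ideal_subspace idI)).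
- by rewrite !mulaZl; apply: (subspaceZ (ideal_subspace idI)).
- by rewrite -!mulaA; apply: (idealMl idI); rewrite !mulaA.
- by rewrite -(mulaA u a z).
Qed.

Fixpoint nh_length (m : nat) : nat := if m is m'.+1 then (nh_length m').*2.+1 else 1.

Lemma nh_length_gt0 m : (0 < nh_length m)%N. Proof. by case: m. Qed.

(* A product of length [2 N + 1] splits as [u z v] with [u], [v] of length [N]; by
   induction these lie in [pow_closure I m], whose sandwiches lie in [I]. *)
Lemma ideal_pow_mprod m I : ideal I -> (forall v, I (mprod (nseq m.+1 v))) ->
  forall s, size s = nh_length m -> I (mprod s).
Proof.
elim: m I => [|m IHm] I idI Ipow s size_s.
  by case: s size_s => [|a []] // _; apply: Ipow.
have IJ := IHm _ (pow_closure_ideal m idI) (@pow_closure_pow I m).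
have Ipow_mid x y z : I (mprod (nseq m.+1 x) ** z ** mprod (nseq m.+1 y)).
  have := ideal_pow_mid idI m.+1 Ipow x y z.
  by rewrite -cat_rcons mprod_cat ?mprod_rcons //; case: (nseq _ _).
rewrite -(cat_take_drop (nh_length m) s).
have size_take : size (take (nh_length m) s) = nh_length m.
  by rewrite size_takel // size_s /= -addnn -addSn leq_addl.
have : size (drop (nh_length m) s) = (nh_length m).+1.
  by rewrite size_drop size_s /= -addnn -addSn addnK.
case: (drop _ s) => [|z s2] //= [size_s2].
have ne_take : take (nh_length m) s != [::].
  by rewrite -size_eq0 size_take -lt0n nh_length_gt0.
have ne_s2 : s2 != [::] by rewrite -size_eq0 size_s2 -lt0n nh_length_gt0.
rewrite -cat_rcons mprod_cat ?mprod_rcons //; last by case: (take _ s).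
by apply: (pow_closure_sandwich idI Ipow_mid); apply: IJ.
Qed.

Theorem nagata_higman n : (0 < n)%N -> (forall v, mprod (nseq n v) = 0) ->
  nilpotent_algebra mulA.
Proof.
case: n => // m _ nil_m; exists (nh_length m).-1 => x s size_s.
apply: (ideal_pow_mprod m ideal0 nil_m (x :: s)).
by rewrite /= size_s prednK ?nh_length_gt0.
Qed.

Lemma eval_wordE a (w : seq nat) : eval_word mulA a w = mprod (map a w).
Proof. by case: w => [|i w] //=; elim: w (a i) => //= j w IHw b. Qed.

Definition x0_pow (k : nat) : word := FMonom (nseq k 0%N).

Lemma x0_powE (w : word) k : (w == x0_pow k) = ((w : seq nat) == nseq k 0%N).
Proof. by rewrite fmP. Qed.

Lemma x0_pow_inj : injective x0_pow.
Proof. by move=> k l /eqP; rewrite x0_powE /= => /eqP /(congr1 size); rewrite !size_nseq. Qed.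

Definition subst_x0 (t : F) (v : A) (i : nat) : A := if i == 0%N then t *: v else 0.

Lemma eval_word_subst_x0 t v (w : seq nat) :
  eval_word mulA (subst_x0 t v) w =
  if w == nseq (size w) 0%N then t ^+ size w *: mprod (nseq (size w) v) else 0.
Proof.
rewrite eval_wordE; case: eqP => [w_x0 | w_nx0].
  by rewrite w_x0 map_nseq size_nseq /subst_x0 eqxx mprod_nseqZ.
have : ~~ all (pred1 0%N) w by apply/negP => /all_pred1P.
rewrite -has_predC => /hasP [i w_i /= i_neq0].
by case/splitPr: w_i => w1 w2; rewrite map_cat /= /subst_x0 (negbTE i_neq0) mprod_mid0.
Qed.

Lemma eval_poly_subst_x0 (g : FXu F) t v K :
    (forall w, w \in msupp g -> (size (w : seq nat) < K)%N) ->
  eval_poly mulA (subst_x0 t v) g =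
  \sum_(k < K) t ^+ k *: (g@_(x0_pow k) *: mprod (nseq k v)).
Proof.
move=> size_lt; pose G k := t ^+ k *: (g@_(x0_pow k) *: mprod (nseq k v)).
transitivity (\sum_(w <- enum_fset (msupp g)) \sum_(k < K) if w == x0_pow k then G k else 0).
  apply: eq_big_seq => w /size_lt w_lt; rewrite eval_word_subst_x0.
  case: eqP => [w_x0 | w_nx0]; last first.
    rewrite scaler0 big1 // => k _; rewrite x0_powE; case: eqP => // w_eq.
    by case: w_nx0; rewrite w_eq size_nseq.
  have -> : w = x0_pow (size w) by apply/eqP; rewrite x0_powE; apply/eqP.
  rewrite (bigD1 (Ordinal w_lt)) //= eqxx big1 ?addr0; last first.
    by move=> k; rewrite eq_sym (inj_eq x0_pow_inj) -val_eqE => /negbTE ->.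
  by rewrite /G /= size_nseq scalerA mulrC -scalerA.
rewrite exchange_big /=; apply: eq_bigr => k _.
rewrite -(big_mkcond (pred1 (x0_pow k))) big_const_seq count_uniq_mem ?fset_uniq //.
case: (x0_pow k \in _) / boolP => [_ | k_out] /=; first by rewrite addr0.
by rewrite /G mcoeff_outdom // scale0r scaler0.
Qed.

Lemma identity_x0_pow_coef n (g : FXu F) :
  is_identity mulA g -> g@_(x0_pow n) != 0 -> forall v, mprod (nseq n v) = 0.
Proof.
move=> [_ g_id] gn_neq0 v.
pose K := (\max_(w <- enum_fset (msupp g)) size (w : seq nat) + n.+1)%N.
have size_lt w : w \in msupp g -> (size (w : seq nat) < K)%N.
  move=> w_in; rewrite /K addnS ltnS; apply: leq_trans (leq_addr _ _).
  exact: leq_bigmax_seq.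
have n_lt : (n < K)%N by rewrite /K addnS ltnS leq_addl.
have : g@_(x0_pow n) *: mprod (nseq n v) = 0.
  apply: (subspace_poly_coef (ideal_subspace ideal0)
    (c := fun k => g@_(x0_pow k) *: mprod (nseq k v)) _ (Ordinal n_lt)) => t.
  by rewrite -(eval_poly_subst_x0 _ _ _ _ size_lt) g_id.
by move/eqP; rewrite scaler_eq0 (negbTE gn_neq0) => /eqP.
Qed.

End NonunitalAlgebra.

Section MultihomogeneousNorm.
#[local] Set Implicit Arguments.
Variables (F : numFieldType) (nrm : FXu F -> F).
Hypothesis nrmMN : MN_norm nrm.

Lemma x0_pow_neq1 k : x0_pow k.+1 != @mone word.
Proof. by rewrite fmP fm1. Qed.

Lemma in_FX_x0_pow k : in_FX (<< x0_pow k.+1 >> : FXu F).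
Proof. by rewrite /in_FX mcoeffU1 (negbTE (x0_pow_neq1 k)). Qed.

Lemma x0_pow_exp k : (<< x0_pow 1 >> : FXu F) ^+ k.+1 = << x0_pow k.+1 >>.
Proof.
elim: k => [|k IHk]; first by rewrite expr1.
rewrite exprS IHk malgM_def fgmulUU mulr1; congr mkmalgU.
by apply/eqP; rewrite fmP fmM.
Qed.

Lemma has_multideg1 n (w : word) : has_multideg [:: n] w = (w == x0_pow n).
Proof.
rewrite /has_multideg /= x0_powE andbT; apply/idP/eqP => [|->]; last first.
  by rewrite all_nseq count_nseq /= mul1n eqxx orbT.
case/andP => /allP w_lt1 /eqP count_w.
have /all_pred1P w_x0 : all (pred1 0%N) w.
  by apply/allP => x /w_lt1; rewrite ltnS leqn0.
by rewrite w_x0 -count_w {2}w_x0 count_nseq /= mul1n.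
Qed.

Lemma mhcomp_x0_pow n (f : FXu F) : mhcomp [:: n] f = f@_(x0_pow n) *: << x0_pow n >>.
Proof.
apply/malgP => w; rewrite mcoeffE has_multideg1 mcoeffZ mcoeffU1 eq_sym.
case: eqP => [-> | _]; last by rewrite mulr0; case: ifP.
by rewrite mulr1; case: ifP => // /negbT x0_out; rewrite mcoeff_outdom.
Qed.

Lemma MN_norm0 : nrm 0 = 0.
Proof.
have in_FX0 : in_FX (0 : FXu F) by rewrite /in_FX mcoeff0.
by case: nrmMN => [[_ _ nrmZ _] _]; rewrite -(scale0r 0) nrmZ // normr0 mul0r.
Qed.

Lemma MN_norm_x0_pow_gt0 k : 0 < nrm << x0_pow k.+1 >>.
Proof.
case: nrmMN => [[nrm_def _ _ _] _]; have [nrm_ge0 nrm_eq0] := nrm_def _ (in_FX_x0_pow k).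
rewrite lt0r nrm_ge0 andbT; apply/eqP => /nrm_eq0 /eqP; rewrite -msupp_eq0 msuppU1.
by apply/negP/fset0Pn; exists (x0_pow k.+1); rewrite inE.
Qed.

Lemma completion_nil_identity (A : lmodType F) (mulA : A -> A -> A) :
    completion_quot_nil mulA nrm ->
  exists n g, [/\ (0 < n)%N, is_identity mulA g & g@_(x0_pow n) != 0].
Proof.
move=> nil_C; case: (nrmMN) => [[_ _ nrmZ _] nrm_mh].
have id0 : is_identity mulA 0.
  by split=> [|a]; rewrite /in_FX ?mcoeff0 // /eval_poly msupp0 big_seq_fset0.
have x0_cauchy : quot_cauchy mulA nrm (fun=> << x0_pow 1 >>).
  split=> [_|e e_gt0]; first exact: in_FX_x0_pow.
  by exists 0%N => k l _ _; exists 0; rewrite subrr addr0 MN_norm0.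
have [[|n] [//= _ x0n_null]] := nil_C _ x0_cauchy.
have [N x0n_near] := x0n_null _ (MN_norm_x0_pow_gt0 n).
have [g [[in_FX_g g_id] lt_nrm]] := x0n_near N (leqnn N); rewrite x0_pow_exp in lt_nrm.
exists n.+1, g; split=> //; apply/eqP => c_eq0.
have in_FX_sum : in_FX (<< x0_pow n.+1 >> + g).
  by rewrite /in_FX mcoeffD in_FX_x0_pow in_FX_g addr0.
have := nrm_mh _ [:: n.+1] in_FX_sum.
rewrite mhcomp_x0_pow mcoeffD mcoeffU1 eqxx c_eq0 addr0 scale1r => le_nrm.
by have := le_lt_trans le_nrm lt_nrm; rewrite ltxx.
Qed.

End MultihomogeneousNorm.

Theorem completion_nil_nilpotent (F : numFieldType) (nrm : FXu F -> F) :
    MN_norm nrm ->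
  forall (A : lmodType F) (mulA : A -> A -> A),
    nonunital_algebra mulA -> completion_quot_nil mulA nrm -> nilpotent_algebra mulA.
Proof.
move=> nrmMN A mulA algA nil_C.
have [n [g [n_gt0 g_id gn_neq0]]] := completion_nil_identity nrmMN nil_C.
exact: nagata_higman algA n n_gt0 (identity_x0_pow_coef algA n g_id gn_neq0).
Qed.

Theorem corollary1p6 (R : realType) :
  (* F = R *)
  (forall (nrm : FXu R -> R), MN_norm nrm ->
   forall (A : lmodType R) (mulA : A -> A -> A),
     nonunital_algebra mulA -> PI_algebra mulA ->
     completion_quot_nil mulA nrm -> nilpotent_algebra mulA) /\
  (* F = C = R[i] *)
  (forall (nrm : FXu R[i] -> R[i]), MN_norm nrm ->
   forall (A : lmodType R[i]) (mulA : A -> A -> A),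
     nonunital_algebra mulA -> PI_algebra mulA ->
     completion_quot_nil mulA nrm -> nilpotent_algebra mulA).
Proof.
by split=> nrm nrmMN A mulA algA _; apply: completion_nil_nilpotent.
Qed.
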